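(* Let $p,q$ be positive integers with $p<q$. Then $$\sum_{n=1}^{\infty}\log\left(1+\frac{1}{n}\right)\cos\left(\frac{(2n+1)\pi p}{q}\right)=\log q\,\cos\left(\frac{\pi p}{q}\right)-2\sin\left(\frac{\pi p}{q}\right)\sum_{j=1}^{q-1}\log\Gamma\left(\frac{j}{q}\right)\sin\left(\frac{2\pi jp}{q}\right).$$
   Context: $\Gamma$ denotes the Euler gamma function. *)

From Stdlib Require Import Reals.
From Coquelicot Require Import Coquelicot.
Open Scope R_scope.

(* Euler Gamma function, via Euler's integral:
   Gamma x = int_0^oo t^(x-1) e^(-t) dt   (meaningful for x > 0). *)
Definition Gamma (x : R) : R :=
  RInt_gen (fun t => Rpower t (x - 1) * exp (- t))
           (at_right 0) (Rbar_locally p_infty).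

From Stdlib Require Import Reals Lra Lia.
From Coquelicot Require Import Coquelicot.
Open Scope R_scope.

(** Write [theta = PI p / q].  Summation by parts turns the [N]-th partial sum into
    [ln (N + 1) cos ((2N+1) theta) + 2 sin theta * sum_(n <= N) sin (2 n theta) ln n].
    For [N = M q], grouping the indices [n = k q + j] and telescoping with
    [Gamma (x + 1) = x Gamma x] gives
    [sum_(k < M) ln (k q + j) = M ln q + ln Gamma (M + j/q) - ln Gamma (j/q)].
    Log-convexity of [Gamma] yields [ln Gamma (M + a) = ln Gamma M + a ln M + O(1/M)] for
    [0 <= a <= 1]; since [sum_(j=1)^q sin (2 j theta) = 0] and
    [2 sin theta sum_(j=1)^q j sin (2 j theta) = - q cos theta], the block partial sums
    converge to the stated value at rate [O(q/M)], and the terms are [O(1/n)].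
    The needed properties of [Gamma] are derived from Euler's integral: convergence by a
    Cauchy criterion, the functional equation by integration by parts, and log-convexity
    by Hoelder's inequality. *)

(** * Elementary real analysis *)

Lemma exp_le_exp_compat a b : a <= b -> exp a <= exp b.
Proof. intros [Hlt | ->]; [left; now apply exp_increasing | apply Rle_refl]. Qed.

Lemma ln_le_sub_1 s : 0 < s -> ln s <= s - 1.
Proof. intros Hs. generalize (exp_ineq1_le (ln s)). rewrite exp_ln by exact Hs. lra. Qed.

Lemma ln_1_plus_bounds y : 0 <= y -> 0 <= ln (1 + y) <= y.
Proof.
  intros Hy. split; [rewrite <- ln_1; apply ln_le; lra|].
  generalize (ln_le_sub_1 (1 + y) ltac:(lra)). lra.
Qed.

Lemma exp_convex a b t : 0 <= t <= 1 ->
  exp (t * a + (1 - t) * b) <= t * exp a + (1 - t) * exp b.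
Proof.
  intros Ht. set (m := t * a + (1 - t) * b).
  assert (Htangent : forall u, exp m * (1 + (u - m)) <= exp u).
  { intros u. replace u with (m + (u - m)) at 2 by ring. rewrite exp_plus.
    generalize (exp_ineq1_le (u - m)) (exp_pos m). nra. }
  generalize (Htangent a) (Htangent b).
  assert (t * (exp m * (1 + (a - m))) + (1 - t) * (exp m * (1 + (b - m))) = exp m)
    by (unfold m; ring).
  nra.
Qed.

Lemma filterlim_rpow_at_right_0 x : 0 < x ->
  filterlim (fun t => exp (x * ln t)) (at_right 0) (locally 0).
Proof.
  intros Hx. eapply filterlim_comp; [|exact is_lim_exp_m].
  eapply filterlim_comp; [apply is_lim_ln_0|].
  intros P [M HM]. exists (M / x). intros y Hy. apply HM.
  apply Rmult_lt_compat_l with (r := x) in Hy; [|exact Hx].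
  replace (x * (M / x)) with M in Hy by (field; lra). exact Hy.
Qed.

Lemma filterlim_exp_neg_half :
  filterlim (fun t => exp (- t / 2)) (Rbar_locally p_infty) (locally 0).
Proof.
  eapply filterlim_comp; [|exact is_lim_exp_m].
  intros P [M HM]. exists (- 2 * M). intros y Hy. apply HM. lra.
Qed.

Lemma filterlim_const_mult_0 {T} {F : (T -> Prop) -> Prop} (c : R) (g : T -> R) :
  filterlim g F (locally 0) -> filterlim (fun t => c * g t) F (locally 0).
Proof.
  intros Hg. rewrite <- (Rmult_0_r c).
  exact (filterlim_comp _ _ _ g (fun z => c * z) F _ _ Hg (filterlim_scal_r c 0)).
Qed.

Lemma filterlim_at_right_0_lt (phi : R -> R) (eps : R) : 0 < eps ->
  filterlim phi (at_right 0) (locally 0) -> exists d, 0 < d /\ forall b, 0 < b < d -> phi b < eps.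
Proof.
  intros Heps Hphi.
  destruct (proj1 (filterlim_locally phi 0) Hphi (mkposreal _ Heps)) as [d Hd].
  exists d. split; [apply cond_pos|]. intros b Hb.
  assert (Hball : ball 0 d b)
    by (change (Rabs (b - 0) < d); rewrite Rminus_0_r, Rabs_pos_eq; lra).
  specialize (Hd b Hball (proj1 Hb)). change (Rabs (phi b - 0) < eps) in Hd.
  apply Rabs_def2 in Hd. lra.
Qed.

Lemma filterlim_p_infty_lt (psi : R -> R) (eps : R) : 0 < eps ->
  filterlim psi (Rbar_locally p_infty) (locally 0) -> exists B, forall b, B < b -> psi b < eps.
Proof.
  intros Heps Hpsi.
  destruct (proj1 (filterlim_locally psi 0) Hpsi (mkposreal _ Heps)) as [B HB].
  exists B. intros b Hb. specialize (HB b Hb). change (Rabs (psi b - 0) < eps) in HB.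
  apply Rabs_def2 in HB. lra.
Qed.

(** * Improper integrals over (0, +oo) *)

Lemma is_RInt_gen_iff_filterlim_RInt {Fa Fb : (R -> Prop) -> Prop}
  {FFa : Filter Fa} {FFb : Filter Fb} (f : R -> R) (l : R) :
  filter_prod Fa Fb (fun ab => ex_RInt f (fst ab) (snd ab)) ->
  is_RInt_gen f Fa Fb l <->
  filterlim (fun ab => RInt f (fst ab) (snd ab)) (filter_prod Fa Fb) (locally l).
Proof.
  intros Hex; split.
  - intros H P HP. unfold filtermap.
    apply (filter_imp (fun ab => (exists y, is_RInt f (fst ab) (snd ab) y /\ P y)
                                 /\ ex_RInt f (fst ab) (snd ab))).
    + intros ab [[y [Hy HPy]] _]. now rewrite (is_RInt_unique _ _ _ _ Hy).
    + apply filter_and; [exact (H P HP) | exact Hex].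
  - intros H P HP. unfold filtermapi.
    apply (filter_imp (fun ab => P (RInt f (fst ab) (snd ab)) /\ ex_RInt f (fst ab) (snd ab))).
    + intros ab [HPab Hab]. exists (RInt f (fst ab) (snd ab)). split; [|exact HPab].
      exact (RInt_correct _ _ _ Hab).
    + apply filter_and; [exact (H P HP) | exact Hex].
Qed.

Lemma filter_prod_0_infty (P Q : R -> Prop) (d B : R) : 0 < d ->
  (forall a, 0 < a < d -> P a) -> (forall b, B < b -> Q b) ->
  filter_prod (at_right 0) (Rbar_locally p_infty) (fun ab => P (fst ab) /\ Q (snd ab)).
Proof.
  intros Hd HP HQ. apply (Filter_prod _ _ _ (fun a => 0 < a < d) (fun b => B < b)).
  - exists (mkposreal d Hd). intros a Ha Ha0. change (Rabs (a - 0) < d) in Ha.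
    rewrite Rminus_0_r, Rabs_pos_eq in Ha; simpl in Ha; lra.
  - now exists B.
  - intros a b Ha Hb. split; auto.
Qed.

Lemma filter_prod_0_infty_pos :
  filter_prod (at_right 0) (Rbar_locally p_infty) (fun ab => 0 < fst ab /\ 0 < snd ab).
Proof. apply (filter_prod_0_infty (fun a => 0 < a) (fun b => 0 < b) 1 0); intros; lra. Qed.

Lemma ex_RInt_gen_0_infty_cauchy (f phi psi : R -> R) :
  (forall a b, 0 < a -> 0 < b -> ex_RInt f a b) ->
  filterlim phi (at_right 0) (locally 0) ->
  filterlim psi (Rbar_locally p_infty) (locally 0) ->
  (forall a b, 0 < a <= b -> b <= 1 -> Rabs (RInt f a b) <= phi b) ->
  (forall a b, 1 <= a <= b -> Rabs (RInt f a b) <= psi a) ->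
  ex_RInt_gen f (at_right 0) (Rbar_locally p_infty).
Proof.
  intros Hex Hphi Hpsi Hnear_0 Hnear_infty.
  assert (Hswap : forall a b, 0 < a -> 0 < b -> Rabs (RInt f b a) = Rabs (RInt f a b)).
  { intros a b Ha Hb. rewrite <- (opp_RInt_swap f a b (Hex a b Ha Hb)). apply Rabs_Ropp. }
  assert (Hlocal : filter_prod (at_right 0) (Rbar_locally p_infty)
                     (fun ab => ex_RInt f (fst ab) (snd ab))).
  { generalize filter_prod_0_infty_pos. apply filter_imp. intros ab [Ha Hb]. now apply Hex. }
  destruct (proj1 (@filterlim_locally_cauchy (R * R) R_CompleteSpace
                     (filter_prod (at_right 0) (Rbar_locally p_infty)) _
                     (fun ab => RInt f (fst ab) (snd ab)))) as [l Hl].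
  2: { exists l. now apply (is_RInt_gen_iff_filterlim_RInt f l Hlocal). }
  intros eps.
  assert (Heps : 0 < eps / 2) by (generalize (cond_pos eps); lra).
  destruct (filterlim_at_right_0_lt phi _ Heps Hphi) as [d [Hd Hphi_small]].
  destruct (filterlim_p_infty_lt psi _ Heps Hpsi) as [B Hpsi_small].
  set (d' := Rmin d 1). set (B' := Rmax B 1).
  assert (Hd' : 0 < d' /\ d' <= d /\ d' <= 1)
    by (unfold d'; split; [apply Rmin_glb_lt; lra | split; [apply Rmin_l | apply Rmin_r]]).
  assert (HB' : B <= B' /\ 1 <= B') by (unfold B'; split; [apply Rmax_l | apply Rmax_r]).
  assert (Hsmall : forall a a', 0 < a < d' -> 0 < a' < d' -> Rabs (RInt f a a') < eps / 2).
  { intros a a' Ha Ha'.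
    destruct (Rle_lt_dec a a'); [|rewrite Hswap by lra];
      (eapply Rle_lt_trans; [apply Hnear_0 | apply Hphi_small]; lra). }
  assert (Hlarge : forall b b', B' < b -> B' < b' -> Rabs (RInt f b b') < eps / 2).
  { intros b b' Hb Hb'.
    destruct (Rle_lt_dec b b'); [|rewrite Hswap by lra];
      (eapply Rle_lt_trans; [apply Hnear_infty | apply Hpsi_small]; lra). }
  exists (fun ab => 0 < fst ab < d' /\ B' < snd ab). split.
  - apply (filter_prod_0_infty (fun a => 0 < a < d') (fun b => B' < b) d' B'); auto; lra.
  - intros [a b] [a' b'] [Ha Hb] [Ha' Hb']. simpl in *.
    change (Rabs (RInt f a' b' - RInt f a b) < eps).
    rewrite <- (RInt_Chasles f a' a b'), <- (RInt_Chasles f a b b') by (apply Hex; lra).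
    change (Rabs (RInt f a' a + (RInt f a b + RInt f b b') - RInt f a b) < eps).
    replace (RInt f a' a + (RInt f a b + RInt f b b') - RInt f a b)
      with (RInt f a' a + RInt f b b') by ring.
    eapply Rle_lt_trans; [apply Rabs_triang|].
    specialize (Hsmall a' a Ha' Ha). specialize (Hlarge b b' Hb Hb'). lra.
Qed.

Lemma is_RInt_gen_0_infty_derive (P f : R -> R) (la lb : R) :
  (forall t, 0 < t -> is_derive P t (f t)) ->
  (forall t, 0 < t -> continuous f t) ->
  filterlim P (at_right 0) (locally la) ->
  filterlim P (Rbar_locally p_infty) (locally lb) ->
  is_RInt_gen f (at_right 0) (Rbar_locally p_infty) (lb - la).
Proof.
  intros Hder Hcont Hla Hlb.
  assert (HDerive : forall t, 0 < t -> Derive P t = f t)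
    by (intros t Ht; now apply is_derive_unique, Hder).
  assert (Hpos : filter_prod (at_right 0) (Rbar_locally p_infty)
                   (fun ab => forall t,
                      Rmin (fst ab) (snd ab) <= t <= Rmax (fst ab) (snd ab) -> 0 < t)).
  { generalize filter_prod_0_infty_pos. apply filter_imp.
    intros [a b] [Ha Hb] t Ht. simpl in *. generalize (Rmin_glb_lt a b 0 Ha Hb). lra. }
  apply (is_RInt_gen_ext (Derive P)).
  { revert Hpos. apply filter_imp. intros ab Hab t Ht. apply HDerive, Hab. lra. }
  apply is_RInt_gen_Derive;
    [revert Hpos; apply filter_imp; intros ab Hab t Ht.. | exact Hla | exact Hlb].
  - eexists. apply Hder, Hab, Ht.
  - apply (continuous_ext_loc _ f); [|apply Hcont, Hab, Ht].
    apply (filter_imp (fun u => 0 < u)); [intros u Hu; now rewrite HDerive|].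
    apply (open_gt 0), Hab, Ht.
Qed.

(** * Euler's integral *)

Definition Gamma_integrand (x t : R) : R := exp ((x - 1) * ln t - t).

Lemma Gamma_integrand_pos x t : 0 < Gamma_integrand x t.
Proof. apply exp_pos. Qed.

Lemma Rpower_mult_exp_Gamma_integrand x t : 0 < t ->
  Rpower t (x - 1) * exp (- t) = Gamma_integrand x t.
Proof. intros Ht. unfold Rpower, Gamma_integrand. rewrite <- exp_plus. f_equal; ring. Qed.

Lemma continuous_Gamma_integrand x t : 0 < t -> continuous (Gamma_integrand x) t.
Proof.
  intros Ht. apply (ex_derive_continuous (Gamma_integrand x)).
  unfold Gamma_integrand. auto_derive. lra.
Qed.

Lemma ex_RInt_Gamma_integrand x a b : 0 < a -> 0 < b -> ex_RInt (Gamma_integrand x) a b.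
Proof.
  intros Ha Hb. apply (ex_RInt_continuous (V := R_CompleteNormedModule)).
  intros t Ht. apply continuous_Gamma_integrand.
  generalize (Rmin_glb_lt a b 0 Ha Hb). lra.
Qed.

Lemma is_derive_Gamma_integrand_succ x t : 0 < t ->
  is_derive (Gamma_integrand (x + 1)) t (x * Gamma_integrand x t - Gamma_integrand (x + 1) t).
Proof.
  intros Ht. unfold Gamma_integrand. auto_derive; [lra|].
  replace ((x + 1 - 1) * ln t + - t) with (ln t + ((x - 1) * ln t - t)) by ring.
  replace ((x + 1 - 1) * ln t - t) with (ln t + ((x - 1) * ln t - t)) by ring.
  rewrite exp_plus, exp_ln by exact Ht. field. lra.
Qed.

Lemma RInt_Gamma_integrand_ge_0 x a b : 0 < a <= b -> 0 <= RInt (Gamma_integrand x) a b.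
Proof.
  intros Hab. apply RInt_ge_0; [lra | apply ex_RInt_Gamma_integrand; lra |].
  intros; left; apply Gamma_integrand_pos.
Qed.

Lemma Gamma_integrand_le_rpow x t : 0 < t <= 1 ->
  Gamma_integrand x t <= exp ((x - 1) * ln t).
Proof. intros Ht. apply exp_le_exp_compat. lra. Qed.

Lemma Gamma_integrand_le_exp_neg_half x :
  exists K, forall t, 1 <= t -> Gamma_integrand x t <= K * exp (- t / 2).
Proof.
  set (m := Rmax (x - 1) 1).
  assert (Hm1 : 1 <= m) by apply Rmax_r.
  assert (Hxm : x - 1 <= m) by apply Rmax_l.
  (* [ln u <= u - 1] at [u = t / (2 m)] gives [m ln t <= m ln (2 m) - m + t / 2]. *)
  exists (exp (m * ln (2 * m) - m)). intros t Ht.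
  unfold Gamma_integrand. rewrite <- exp_plus. apply exp_le_exp_compat.
  assert (Hlnt : 0 <= ln t) by (rewrite <- ln_1; apply ln_le; lra).
  assert (Hu := ln_le_sub_1 (t / (2 * m)) ltac:(apply Rdiv_lt_0_compat; lra)).
  rewrite ln_div in Hu by lra.
  assert (Hmu : m * (ln t - ln (2 * m)) <= m * (t / (2 * m) - 1))
    by (apply Rmult_le_compat_l; lra).
  replace (m * (t / (2 * m) - 1)) with (t / 2 - m) in Hmu by (field; lra).
  nra.
Qed.

Lemma is_RInt_rpow x u v : 0 < x -> 0 < u -> 0 < v ->
  is_RInt (fun t => exp ((x - 1) * ln t)) u v (exp (x * ln v) / x - exp (x * ln u) / x).
Proof.
  intros Hx Hu Hv.
  assert (Hmin : 0 < Rmin u v) by now apply Rmin_glb_lt.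
  apply (is_RInt_derive (V := R_CompleteNormedModule) (fun t => exp (x * ln t) / x)).
  - intros t Ht. auto_derive; [lra|].
    replace ((x - 1) * ln t) with (x * ln t + - ln t) by ring.
    rewrite exp_plus, exp_Ropp, exp_ln by lra. field. lra.
  - intros t Ht. apply (ex_derive_continuous (fun t => exp ((x - 1) * ln t))).
    auto_derive. lra.
Qed.

Lemma is_RInt_exp_neg_half K u v :
  is_RInt (fun t => K * exp (- t / 2)) u v (2 * K * exp (- u / 2) - 2 * K * exp (- v / 2)).
Proof.
  replace (2 * K * exp (- u / 2) - 2 * K * exp (- v / 2))
    with (minus (- 2 * K * exp (- v / 2)) (- 2 * K * exp (- u / 2)))
    by (unfold minus, plus, opp; simpl; ring).
  apply (is_RInt_derive (V := R_CompleteNormedModule) (fun t => - 2 * K * exp (- t / 2))).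
  - intros t _. auto_derive; [exact I | unfold Rdiv; lra].
  - intros t _. apply (ex_derive_continuous (fun t => K * exp (- t / 2))). auto_derive. exact I.
Qed.

Lemma RInt_Gamma_integrand_near_0 x a b : 0 < x -> 0 < a <= b -> b <= 1 ->
  Rabs (RInt (Gamma_integrand x) a b) <= / x * exp (x * ln b).
Proof.
  intros Hx Hab Hb.
  assert (Hex := ex_RInt_Gamma_integrand x a b ltac:(lra) ltac:(lra)).
  assert (Hrpow := is_RInt_rpow x a b Hx ltac:(lra) ltac:(lra)).
  rewrite Rabs_pos_eq by (apply RInt_Gamma_integrand_ge_0; lra).
  eapply Rle_trans.
  - apply (RInt_le _ (fun t => exp ((x - 1) * ln t)) a b);
      [lra | exact Hex | eexists; exact Hrpow |].
    intros t Ht. apply Gamma_integrand_le_rpow. lra.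
  - rewrite (is_RInt_unique _ _ _ _ Hrpow).
    assert (0 < exp (x * ln a) / x) by (apply Rdiv_lt_0_compat; [apply exp_pos | exact Hx]).
    unfold Rdiv in *. lra.
Qed.

Lemma RInt_Gamma_integrand_near_infty x : exists K, forall a b, 1 <= a <= b ->
  Rabs (RInt (Gamma_integrand x) a b) <= K * exp (- a / 2).
Proof.
  destruct (Gamma_integrand_le_exp_neg_half x) as [K HK].
  exists (2 * K). intros a b Hab.
  assert (Hex := ex_RInt_Gamma_integrand x a b ltac:(lra) ltac:(lra)).
  assert (Hexp := is_RInt_exp_neg_half K a b).
  rewrite Rabs_pos_eq by (apply RInt_Gamma_integrand_ge_0; lra).
  eapply Rle_trans.
  - apply (RInt_le _ (fun t => K * exp (- t / 2)) a b); [lra | exact Hex | eexists; exact Hexp |].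
    intros t Ht. apply HK. lra.
  - rewrite (is_RInt_unique _ _ _ _ Hexp).
    assert (0 <= K).
    { apply Rmult_le_reg_r with (exp (- a / 2)); [apply exp_pos|].
      rewrite Rmult_0_l. eapply Rle_trans; [|apply HK; lra]. left; apply Gamma_integrand_pos. }
    generalize (exp_pos (- b / 2)). nra.
Qed.

Lemma ex_RInt_gen_Gamma_integrand x : 0 < x ->
  ex_RInt_gen (Gamma_integrand x) (at_right 0) (Rbar_locally p_infty).
Proof.
  intros Hx. destruct (RInt_Gamma_integrand_near_infty x) as [K HK].
  apply (ex_RInt_gen_0_infty_cauchy _ (fun t => / x * exp (x * ln t)) (fun t => K * exp (- t / 2))).
  - apply ex_RInt_Gamma_integrand.
  - apply filterlim_const_mult_0, filterlim_rpow_at_right_0, Hx.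
  - apply filterlim_const_mult_0, filterlim_exp_neg_half.
  - intros a b Hab Hb. now apply RInt_Gamma_integrand_near_0.
  - exact HK.
Qed.

Lemma Gamma_unique x l :
  is_RInt_gen (Gamma_integrand x) (at_right 0) (Rbar_locally p_infty) l -> Gamma x = l.
Proof.
  intros Hl. apply is_RInt_gen_unique.
  apply (is_RInt_gen_ext (Gamma_integrand x)); [|exact Hl].
  generalize filter_prod_0_infty_pos. apply filter_imp. intros [a b] [Ha Hb] t Ht. simpl in *.
  apply eq_sym, Rpower_mult_exp_Gamma_integrand. generalize (Rmin_glb_lt a b 0 Ha Hb). lra.
Qed.

Lemma is_RInt_gen_Gamma x : 0 < x ->
  is_RInt_gen (Gamma_integrand x) (at_right 0) (Rbar_locally p_infty) (Gamma x).
Proof.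
  intros Hx. assert (H := RInt_gen_correct _ (ex_RInt_gen_Gamma_integrand x Hx)).
  now rewrite (Gamma_unique x _ H).
Qed.

Lemma Gamma_pos x : 0 < x -> 0 < Gamma x.
Proof.
  intros Hx.
  set (F := filter_prod (at_right 0) (Rbar_locally p_infty)).
  assert (Hlocal : F (fun ab => 0 < fst ab < 1 /\ 2 < snd ab))
    by (apply (filter_prod_0_infty (fun a => 0 < a < 1) (fun b => 2 < b) 1 2); auto; lra).
  assert (Hlim : filterlim (fun ab => RInt (Gamma_integrand x) (fst ab) (snd ab)) F
                   (locally (Gamma x))).
  { apply is_RInt_gen_iff_filterlim_RInt; [|now apply is_RInt_gen_Gamma].
    revert Hlocal. apply filter_imp. intros [a b] Hab. simpl in Hab |- *.
    apply ex_RInt_Gamma_integrand; lra. }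
  assert (H12 : 0 < RInt (Gamma_integrand x) 1 2).
  { apply RInt_gt_0; [lra | intros; apply Gamma_integrand_pos |].
    intros t Ht. apply continuous_Gamma_integrand. lra. }
  apply (Rlt_le_trans _ _ _ H12).
  apply (filterlim_le (F := F) (fun _ => RInt (Gamma_integrand x) 1 2)
           (fun ab => RInt (Gamma_integrand x) (fst ab) (snd ab))
           (RInt (Gamma_integrand x) 1 2) (Gamma x)); [| apply filterlim_const | exact Hlim].
  revert Hlocal. apply filter_imp. intros [a b] Hab. simpl in Hab |- *.
  assert (Hex : forall u v, 0 < u -> 0 < v -> ex_RInt (Gamma_integrand x) u v)
    by apply ex_RInt_Gamma_integrand.
  rewrite <- (RInt_Chasles _ a 1 b), <- (RInt_Chasles _ 1 2 b) by (apply Hex; lra).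
  change (RInt (Gamma_integrand x) 1 2 <=
          RInt (Gamma_integrand x) a 1
          + (RInt (Gamma_integrand x) 1 2 + RInt (Gamma_integrand x) 2 b)).
  generalize (RInt_Gamma_integrand_ge_0 x a 1 ltac:(lra))
             (RInt_Gamma_integrand_ge_0 x 2 b ltac:(lra)).
  lra.
Qed.

Lemma filterlim_Gamma_integrand_at_right_0 x : 0 < x ->
  filterlim (Gamma_integrand (x + 1)) (at_right 0) (locally 0).
Proof.
  intros Hx.
  apply (filterlim_le_le (fun _ => 0) _ (fun t => exp (x * ln t)) (Finite 0));
    [| apply filterlim_const | now apply filterlim_rpow_at_right_0].
  exists (mkposreal 1 Rlt_0_1). intros t Ht Ht0. change (Rabs (t - 0) < 1) in Ht.
  rewrite Rminus_0_r, Rabs_pos_eq in Ht by lra.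
  split; [left; apply Gamma_integrand_pos|].
  replace x with (x + 1 - 1) at 2 by ring. apply Gamma_integrand_le_rpow. lra.
Qed.

Lemma filterlim_Gamma_integrand_p_infty x :
  filterlim (Gamma_integrand x) (Rbar_locally p_infty) (locally 0).
Proof.
  destruct (Gamma_integrand_le_exp_neg_half x) as [K HK].
  apply (filterlim_le_le (fun _ => 0) _ (fun t => K * exp (- t / 2)) (Finite 0));
    [| apply filterlim_const | apply filterlim_const_mult_0, filterlim_exp_neg_half].
  exists 1. intros t Ht. split; [left; apply Gamma_integrand_pos | apply HK; lra].
Qed.

Lemma Gamma_succ x : 0 < x -> Gamma (x + 1) = x * Gamma x.
Proof.
  intros Hx.
  (* Integration by parts: the boundary term [t^x e^(-t)] vanishes at both ends. *)
  assert (Hparts : is_RInt_gen (fun t => x * Gamma_integrand x t - Gamma_integrand (x + 1) t)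
                     (at_right 0) (Rbar_locally p_infty) (0 - 0)).
  { apply is_RInt_gen_0_infty_derive with (P := Gamma_integrand (x + 1)).
    - intros t Ht. now apply is_derive_Gamma_integrand_succ.
    - intros t Ht. apply (ex_derive_continuous
        (fun t => x * Gamma_integrand x t - Gamma_integrand (x + 1) t)).
      unfold Gamma_integrand. auto_derive. lra.
    - now apply filterlim_Gamma_integrand_at_right_0.
    - apply filterlim_Gamma_integrand_p_infty. }
  apply Gamma_unique.
  replace (x * Gamma x) with (x * Gamma x - (0 - 0)) by ring.
  apply (is_RInt_gen_ext (fun t => minus (scal x (Gamma_integrand x t))
                                   (x * Gamma_integrand x t - Gamma_integrand (x + 1) t))).
  - apply filter_forall. intros ab t _.
    change (x * Gamma_integrand x t - (x * Gamma_integrand x t - Gamma_integrand (x + 1) t)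
            = Gamma_integrand (x + 1) t).
    ring.
  - exact (is_RInt_gen_minus _ _ _ _ (is_RInt_gen_scal _ x _ (is_RInt_gen_Gamma x Hx)) Hparts).
Qed.

Lemma ln_Gamma_succ x : 0 < x -> ln (Gamma (x + 1)) = ln x + ln (Gamma x).
Proof.
  intros Hx. rewrite Gamma_succ by exact Hx. apply ln_mult; [exact Hx | now apply Gamma_pos].
Qed.

Lemma ln_Gamma_convex x y t : 0 < x -> 0 < y -> 0 <= t <= 1 ->
  ln (Gamma (t * x + (1 - t) * y)) <= t * ln (Gamma x) + (1 - t) * ln (Gamma y).
Proof.
  intros Hx Hy Ht.
  set (z := t * x + (1 - t) * y).
  assert (Hz : 0 < z) by (unfold z; nra).
  set (A := Gamma x). set (B := Gamma y).
  assert (HA : 0 < A) by now apply Gamma_pos.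
  assert (HB : 0 < B) by now apply Gamma_pos.
  set (C := exp (t * ln A + (1 - t) * ln B)).
  set (g := fun s => C * (t / A * Gamma_integrand x s + (1 - t) / B * Gamma_integrand y s)).
  (* Hoelder's inequality, via the convexity of [exp] applied pointwise to the integrands
     normalized by [A] and [B]. *)
  assert (Hpoint : forall s, Gamma_integrand z s <= g s).
  { intros s. unfold g, C, Gamma_integrand.
    replace ((z - 1) * ln s - s) with
      (t * ((x - 1) * ln s - s - ln A) + (1 - t) * ((y - 1) * ln s - s - ln B)
       + (t * ln A + (1 - t) * ln B)) by (unfold z; ring).
    rewrite exp_plus, Rmult_comm. apply Rmult_le_compat_l; [left; apply exp_pos|].
    eapply Rle_trans; [apply exp_convex, Ht|].
    assert (Hdiv : forall u L, 0 < L -> exp (u - ln L) = exp u / L).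
    { intros u L HL. unfold Rminus. rewrite exp_plus, exp_Ropp, exp_ln by exact HL. reflexivity. }
    rewrite !Hdiv by assumption. right. field. lra. }
  assert (Hg : is_RInt_gen g (at_right 0) (Rbar_locally p_infty) C).
  { replace C with (scal C (plus (scal (t / A) A) (scal ((1 - t) / B) B)))
      by (change (C * (t / A * A + (1 - t) / B * B) = C); field; lra).
    exact (is_RInt_gen_scal _ C _ (is_RInt_gen_plus _ _ _ _
             (is_RInt_gen_scal _ (t / A) _ (is_RInt_gen_Gamma x Hx))
             (is_RInt_gen_scal _ ((1 - t) / B) _ (is_RInt_gen_Gamma y Hy)))). }
  assert (Hle : Rabs (Gamma z) <= C).
  { apply (RInt_gen_norm (Fa := at_right 0) (Fb := Rbar_locally p_infty)
             (Gamma_integrand z) g (Gamma z) C); [| | exact (is_RInt_gen_Gamma z Hz) | exact Hg].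
    - apply (filter_imp (fun ab => 0 < fst ab < 1 /\ 1 < snd ab)).
      + intros ab Hab. lra.
      + apply (filter_prod_0_infty (fun a => 0 < a < 1) (fun b => 1 < b) 1 1); auto; lra.
    - apply filter_forall. intros ab s _. rewrite Rabs_pos_eq; [apply Hpoint|].
      left; apply Gamma_integrand_pos. }
  unfold C in Hle. rewrite <- (ln_exp (t * ln A + (1 - t) * ln B)).
  apply ln_le; [now apply Gamma_pos|]. generalize (Rle_abs (Gamma z)). lra.
Qed.

Definition ln_Gamma_defect (m a : R) : R := ln (Gamma (m + a)) - ln (Gamma m) - a * ln m.

Lemma Rabs_ln_Gamma_defect_le m a : 0 < m -> 0 <= a <= 1 -> Rabs (ln_Gamma_defect m a) <= / m.
Proof.
  intros Hm Ha. unfold ln_Gamma_defect.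
  assert (Hup := ln_Gamma_convex m (m + 1) (1 - a) Hm ltac:(lra) ltac:(lra)).
  replace ((1 - a) * m + (1 - (1 - a)) * (m + 1)) with (m + a) in Hup by ring.
  rewrite ln_Gamma_succ in Hup by exact Hm.
  assert (Hlo := ln_Gamma_convex (m + a) (m + a + 1) a ltac:(lra) ltac:(lra) ltac:(lra)).
  replace (a * (m + a) + (1 - a) * (m + a + 1)) with (m + 1) in Hlo by ring.
  rewrite !ln_Gamma_succ in Hlo by lra.
  assert (Hln : 0 <= ln (m + a) - ln m <= a / m).
  { rewrite <- ln_div by lra. replace ((m + a) / m) with (1 + a / m) by (field; lra).
    apply ln_1_plus_bounds. apply Rdiv_le_0_compat; lra. }
  assert (Hinv : 0 < / m) by now apply Rinv_0_lt_compat.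
  assert (Hdefect : (1 - a) * (ln (m + a) - ln m) <= / m).
  { apply Rle_trans with ((1 - a) * (a / m)); [apply Rmult_le_compat_l; lra|].
    unfold Rdiv. nra. }
  apply Rabs_le. split; nra.
Qed.

(** * Finite sums *)

(* Coquelicot states the next four facts in an abelian monoid: their equations are not at type
   [R], so [ring] fails on them, and [plus]/[mult] do not match [Rplus]/[Rmult] when rewriting. *)
Lemma sum_n_m_ext_loc_R (a b : nat -> R) n m :
  (forall k, (n <= k <= m)%nat -> a k = b k) -> sum_n_m a n m = sum_n_m b n m.
Proof. exact (sum_n_m_ext_loc a b n m). Qed.

Lemma sum_n_m_Rplus (u v : nat -> R) n m :
  sum_n_m (fun k => u k + v k) n m = sum_n_m u n m + sum_n_m v n m.
Proof. exact (sum_n_m_plus u v n m). Qed.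

Lemma sum_n_m_Rmult_l (c : R) (u : nat -> R) n m :
  sum_n_m (fun k => c * u k) n m = c * sum_n_m u n m.
Proof. exact (sum_n_m_mult_l c u n m). Qed.

Lemma sum_n_m_Rminus (u v : nat -> R) n m :
  sum_n_m (fun k => u k - v k) n m = sum_n_m u n m - sum_n_m v n m :> R.
Proof.
  rewrite (sum_n_m_ext_loc_R (fun k => u k - v k) (fun k => u k + -1 * v k)) by (intros; ring).
  rewrite sum_n_m_Rplus, sum_n_m_Rmult_l. ring.
Qed.

Lemma sum_n_m_shift (a : nat -> R) k n m :
  sum_n_m a (k + n) (k + m) = sum_n_m (fun i => a (k + i)%nat) n m.
Proof.
  revert a. induction k as [|k IH]; intros a; [reflexivity|].
  rewrite !Nat.add_succ_l, <- sum_n_m_S, IH. reflexivity.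
Qed.

Lemma sum_n_m_1_add (a : nat -> R) N r :
  sum_n_m a 1 (N + r) = sum_n_m a 1 N + sum_n_m (fun i => a (N + i)%nat) 1 r :> R.
Proof.
  rewrite (sum_n_m_Chasles a 1 N (N + r)) by lia.
  replace (S N) with (N + 1)%nat by lia. now rewrite sum_n_m_shift.
Qed.

Lemma sum_n_m_telescope (u : nat -> R) N :
  sum_n_m (fun n => u (pred n) - u n) 1 N = u O - u N.
Proof.
  induction N as [|N IH].
  - rewrite sum_n_m_zero by lia. change (0 = u O - u O). ring.
  - rewrite sum_n_Sm, IH by lia. change (u O - u N + (u N - u (S N)) = u O - u (S N)). ring.
Qed.

Lemma sum_n_m_by_parts (L c : nat -> R) N :
  sum_n_m (fun n => (L (S n) - L n) * c n) 1 N
  = L (S N) * c N - L 1%nat * c O + sum_n_m (fun n => L n * (c (pred n) - c n)) 1 N.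
Proof.
  induction N as [|N IH].
  - rewrite !sum_n_m_zero by lia. change (0 = L 1%nat * c O - L 1%nat * c O + 0). ring.
  - rewrite !sum_n_Sm, IH by lia. cbn [pred].
    change (L (S N) * c N - L 1%nat * c O + sum_n_m (fun n => L n * (c (pred n) - c n)) 1 N
            + (L (S (S N)) - L (S N)) * c (S N)
            = L (S (S N)) * c (S N) - L 1%nat * c O
              + (sum_n_m (fun n => L n * (c (pred n) - c n)) 1 N + L (S N) * (c N - c (S N)))).
    ring.
Qed.

Lemma Rabs_sum_n_m_le (u : nat -> R) (b : R) m :
  (forall k, (1 <= k <= m)%nat -> Rabs (u k) <= b) -> Rabs (sum_n_m u 1 m) <= INR m * b.
Proof.
  induction m as [|m IH]; intros Hb.
  - rewrite sum_n_m_zero by lia. change (Rabs 0 <= 0 * b). rewrite Rabs_R0. lra.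
  - rewrite sum_n_Sm by lia. change (Rabs (sum_n_m u 1 m + u (S m)) <= INR (S m) * b).
    rewrite S_INR. eapply Rle_trans; [apply Rabs_triang|].
    assert (Rabs (sum_n_m u 1 m) <= INR m * b) by (apply IH; intros; apply Hb; lia).
    assert (Rabs (u (S m)) <= b) by (apply Hb; lia).
    lra.
Qed.

Lemma is_lim_seq_of_blocks (u : nat -> R) (l C : R) (q : nat) : (0 < q)%nat ->
  (forall M r, (1 <= M)%nat -> (r < q)%nat -> Rabs (u (M * q + r)%nat - l) <= C / INR M) ->
  is_lim_seq u l.
Proof.
  intros Hq Hblock. apply is_lim_seq_spec. intros eps.
  assert (HC : 0 < Rabs C + 1) by (generalize (Rabs_pos C); lra).
  destruct (archimed_cor1 (eps / (Rabs C + 1))) as [K [HK HK0]].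
  { apply Rdiv_lt_0_compat; [apply cond_pos | exact HC]. }
  exists (K * q)%nat. intros n Hn.
  assert (Hdec : n = ((n / q) * q + n mod q)%nat)
    by (rewrite Nat.mul_comm; apply Nat.div_mod; lia).
  assert (HKM : (K <= n / q)%nat) by (apply Nat.div_le_lower_bound; lia).
  assert (HKM' : 0 < INR K <= INR (n / q)) by (split; [apply lt_0_INR | apply le_INR]; lia).
  rewrite Hdec. eapply Rle_lt_trans; [apply Hblock; [lia | apply Nat.mod_upper_bound; lia]|].
  apply Rle_lt_trans with ((Rabs C + 1) * / INR K).
  - unfold Rdiv. apply Rle_trans with (Rabs C * / INR (n / q)).
    + apply Rmult_le_compat_r; [left; apply Rinv_0_lt_compat; lra | apply Rle_abs].
    + apply Rmult_le_compat; [apply Rabs_pos | left; apply Rinv_0_lt_compat; lra | lra |].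
      apply Rinv_le_contravar; lra.
  - apply Rmult_lt_compat_l with (r := Rabs C + 1) in HK; [|exact HC].
    replace ((Rabs C + 1) * (eps / (Rabs C + 1))) with (pos eps) in HK by (field; lra).
    exact HK.
Qed.

(** * The series *)

Section Trigonometric_sums.

Variables (theta : R) (p q : nat).
Hypothesis theta_period : INR q * theta = INR p * PI.
Hypothesis sin_theta_neq_0 : sin theta <> 0.

Definition cos_odd (n : nat) : R := cos ((2 * INR n + 1) * theta).
Definition sin_even (n : nat) : R := sin (2 * INR n * theta).

Lemma cos_odd_sub_succ n : cos_odd n - cos_odd (S n) = 2 * sin theta * sin_even (S n).
Proof.
  unfold cos_odd, sin_even. rewrite S_INR.
  replace ((2 * INR n + 1) * theta) with (2 * (INR n + 1) * theta - theta) by ring.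
  replace ((2 * (INR n + 1) + 1) * theta) with (2 * (INR n + 1) * theta + theta) by ring.
  rewrite cos_minus, cos_plus. ring.
Qed.

Lemma sin_even_succ_sub n : sin_even (S n) - sin_even n = 2 * sin theta * cos_odd n.
Proof.
  unfold cos_odd, sin_even. rewrite S_INR.
  replace (2 * (INR n + 1) * theta) with ((2 * INR n + 1) * theta + theta) by ring.
  replace (2 * INR n * theta) with ((2 * INR n + 1) * theta - theta) by ring.
  rewrite sin_minus, sin_plus. ring.
Qed.

Lemma cos_odd_periodic n M : cos_odd (n + M * q) = cos_odd n.
Proof.
  unfold cos_odd. rewrite plus_INR, mult_INR.
  replace ((2 * (INR n + INR M * INR q) + 1) * theta)
    with ((2 * INR n + 1) * theta + 2 * INR M * (INR q * theta)) by ring.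
  rewrite theta_period.
  replace (2 * INR M * (INR p * PI)) with (2 * INR (M * p) * PI) by (rewrite mult_INR; ring).
  apply cos_period.
Qed.

Lemma sin_even_periodic n M : sin_even (n + M * q) = sin_even n.
Proof.
  unfold sin_even. rewrite plus_INR, mult_INR.
  replace (2 * (INR n + INR M * INR q) * theta)
    with (2 * INR n * theta + 2 * INR M * (INR q * theta)) by ring.
  rewrite theta_period.
  replace (2 * INR M * (INR p * PI)) with (2 * INR (M * p) * PI) by (rewrite mult_INR; ring).
  apply sin_period.
Qed.

Lemma sin_even_period : sin_even q = 0.
Proof.
  replace q with (0 + 1 * q)%nat at 1 by lia.
  rewrite sin_even_periodic. unfold sin_even. simpl.
  rewrite Rmult_0_r, Rmult_0_l. apply sin_0.
Qed.

Lemma cos_odd_period : cos_odd q = cos_odd 0.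
Proof. replace q with (0 + 1 * q)%nat at 1 by lia. apply cos_odd_periodic. Qed.

Lemma sum_sin_even_period : sum_n_m sin_even 1 q = 0.
Proof.
  apply (Rmult_eq_reg_l (2 * sin theta)); [|apply Rmult_integral_contrapositive; split; lra].
  rewrite <- sum_n_m_Rmult_l, Rmult_0_r.
  rewrite (sum_n_m_ext_loc_R _ (fun n => cos_odd (pred n) - cos_odd n)).
  - rewrite sum_n_m_telescope.
    rewrite cos_odd_period. apply Rminus_eq_0.
  - intros n Hn. destruct n as [|n]; [lia|]. cbn [pred]. now rewrite cos_odd_sub_succ.
Qed.

Lemma sum_cos_odd_period : sum_n_m cos_odd 1 q = 0.
Proof.
  apply (Rmult_eq_reg_l (2 * sin theta)); [|apply Rmult_integral_contrapositive; split; lra].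
  rewrite <- sum_n_m_Rmult_l, Rmult_0_r.
  rewrite (sum_n_m_ext_loc_R _ (fun n => - sin_even (S (pred n)) - - sin_even (S n))).
  - rewrite (sum_n_m_telescope (fun n => - sin_even (S n))).
    replace (S q) with (1 + 1 * q)%nat by lia. rewrite sin_even_periodic. ring.
  - intros n Hn. destruct n as [|n]; [lia|]. cbn [pred]. rewrite <- sin_even_succ_sub. lra.
Qed.

Lemma sum_INR_mult_sin_even_period :
  2 * sin theta * sum_n_m (fun n => INR n * sin_even n) 1 q = - INR q * cos_odd 0.
Proof.
  rewrite <- sum_n_m_Rmult_l.
  rewrite (sum_n_m_ext_loc_R _ (fun n => INR n * (cos_odd (pred n) - cos_odd n))).
  2: { intros n Hn. destruct n as [|n]; [lia|]. cbn [pred]. rewrite cos_odd_sub_succ. ring. }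
  assert (Hparts := sum_n_m_by_parts INR cos_odd q).
  rewrite (sum_n_m_ext_loc_R _ cos_odd) in Hparts by (intros n _; rewrite S_INR; ring).
  rewrite sum_cos_odd_period, cos_odd_period, S_INR in Hparts. simpl (INR 1) in Hparts.
  lra.
Qed.

End Trigonometric_sums.

Section Series.

Variables (theta : R) (p q : nat).
Hypothesis q_pos : (0 < q)%nat.
Hypothesis theta_period : INR q * theta = INR p * PI.
Hypothesis sin_theta_neq_0 : sin theta <> 0.

Definition series_term (n : nat) : R := ln (1 + 1 / INR n) * cos_odd theta n.

Definition partial_sum (N : nat) : R := sum_n_m series_term 1 N.

Definition series_value : R :=
  ln (INR q) * cos_odd theta 0
  - 2 * sin theta * sum_n_m (fun j => sin_even theta j * ln (Gamma (INR j / INR q))) 1 q.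

Lemma partial_sum_by_parts N :
  partial_sum N = ln (INR (S N)) * cos_odd theta N
                  + 2 * sin theta * sum_n_m (fun n => sin_even theta n * ln (INR n)) 1 N.
Proof.
  unfold partial_sum.
  rewrite (sum_n_m_ext_loc_R _ (fun n => (ln (INR (S n)) - ln (INR n)) * cos_odd theta n)).
  2: { intros n Hn. unfold series_term. f_equal.
       assert (Hn0 : 0 < INR n) by (apply lt_0_INR; lia).
       rewrite <- ln_div by (try apply lt_0_INR; lia). f_equal. rewrite S_INR. field. lra. }
  rewrite (sum_n_m_by_parts (fun n => ln (INR n)) (cos_odd theta)).
  simpl (INR 1). rewrite ln_1, <- sum_n_m_Rmult_l.
  rewrite (sum_n_m_ext_loc_R (fun n => ln (INR n) * (cos_odd theta (pred n) - cos_odd theta n))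
             (fun n => 2 * sin theta * (sin_even theta n * ln (INR n)))).
  - ring.
  - intros n Hn. destruct n as [|n]; [lia|]. cbn [pred]. rewrite cos_odd_sub_succ. ring.
Qed.

Lemma sum_sin_even_ln_regroup M :
  sum_n_m (fun n => sin_even theta n * ln (INR n)) 1 (M * q)
  = sum_n_m (fun j => sin_even theta j * (INR M * ln (INR q)
       + ln (Gamma (INR M + INR j / INR q)) - ln (Gamma (INR j / INR q)))) 1 q.
Proof.
  assert (Hq : 0 < INR q) by now apply lt_0_INR.
  induction M as [|M IH].
  - rewrite sum_n_m_zero by (simpl; lia).
    rewrite (sum_n_m_ext_loc_R _ (fun _ => 0)) by (intros; simpl (INR 0); rewrite Rplus_0_l; ring).
    rewrite sum_n_m_const. change (0 = INR (S q - 1) * 0). ring.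
  - rewrite Nat.mul_succ_l, sum_n_m_1_add, IH, <- sum_n_m_Rplus.
    apply sum_n_m_ext_loc_R. intros j Hj.
    assert (Hj0 : 0 < INR j / INR q) by (apply Rdiv_lt_0_compat; [apply lt_0_INR; lia | exact Hq]).
    assert (HM : 0 <= INR M) by apply pos_INR.
    rewrite Nat.add_comm, (sin_even_periodic _ p q theta_period).
    replace (INR (j + M * q)) with (INR q * (INR M + INR j / INR q))
      by (rewrite plus_INR, mult_INR; field; lra).
    replace (INR (S M) + INR j / INR q) with (INR M + INR j / INR q + 1) by (rewrite S_INR; ring).
    rewrite ln_mult, ln_Gamma_succ, S_INR by lra.
    ring.
Qed.

Lemma partial_sum_mult_period_sub_value M : (1 <= M)%nat ->
  partial_sum (M * q) - series_value
  = cos_odd theta 0 * ln (1 + 1 / (INR M * INR q))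
    + 2 * sin theta
      * sum_n_m (fun j => sin_even theta j * ln_Gamma_defect (INR M) (INR j / INR q)) 1 q.
Proof.
  intros HM.
  assert (Hq : 0 < INR q) by now apply lt_0_INR.
  assert (HM0 : 0 < INR M) by (apply lt_0_INR; lia).
  rewrite partial_sum_by_parts, sum_sin_even_ln_regroup.
  replace (M * q)%nat with (0 + M * q)%nat by lia.
  rewrite (cos_odd_periodic _ p q theta_period), Nat.add_0_l.
  set (E := fun j => sin_even theta j * ln_Gamma_defect (INR M) (INR j / INR q)).
  set (G := fun j => sin_even theta j * ln (Gamma (INR j / INR q))).
  rewrite (sum_n_m_ext_loc_R _
             (fun j => (INR M * ln (INR q) + ln (Gamma (INR M))) * sin_even theta j
                       + ln (INR M) / INR q * (INR j * sin_even theta j) + (E j - G j)))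
    by (intros j _; unfold E, G, ln_Gamma_defect; field; lra).
  rewrite !sum_n_m_Rplus, sum_n_m_Rminus, !sum_n_m_Rmult_l.
  rewrite (sum_sin_even_period _ p q theta_period sin_theta_neq_0).
  assert (Hweighted := sum_INR_mult_sin_even_period _ p q theta_period sin_theta_neq_0).
  assert (Hln : ln (INR (S (M * q))) = ln (INR M) + ln (INR q) + ln (1 + 1 / (INR M * INR q))).
  { assert (Hfrac : 0 < 1 + 1 / (INR M * INR q))
      by (apply Rplus_lt_0_compat; [lra | apply Rdiv_lt_0_compat; nra]).
    rewrite <- (ln_mult (INR M)), <- ln_mult by nra.
    f_equal. rewrite S_INR, mult_INR. field. lra. }
  unfold series_value. fold G. rewrite Hln.
  replace (2 * sin theta * ((INR M * ln (INR q) + ln (Gamma (INR M))) * 0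
             + ln (INR M) / INR q * sum_n_m (fun j => INR j * sin_even theta j) 1 q
             + (sum_n_m E 1 q - sum_n_m G 1 q)))
    with (ln (INR M) / INR q * (2 * sin theta * sum_n_m (fun j => INR j * sin_even theta j) 1 q)
          + 2 * sin theta * sum_n_m E 1 q - 2 * sin theta * sum_n_m G 1 q) by ring.
  rewrite Hweighted. field. lra.
Qed.

Lemma Rabs_partial_sum_mult_period_sub_value M : (1 <= M)%nat ->
  Rabs (partial_sum (M * q) - series_value) <= (1 + 2 * INR q) / INR M.
Proof.
  intros HM.
  assert (Hq : 1 <= INR q) by (apply (le_INR 1); lia).
  assert (HM1 : 1 <= INR M) by (apply (le_INR 1); lia).
  assert (HM0 : 0 < / INR M) by (apply Rinv_0_lt_compat; lra).
  rewrite partial_sum_mult_period_sub_value by exact HM.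
  set (D := sum_n_m _ 1 q).
  assert (Hln : Rabs (ln (1 + 1 / (INR M * INR q))) <= / INR M).
  { destruct (ln_1_plus_bounds (1 / (INR M * INR q))) as [Hlo Hhi].
    { apply Rlt_le, Rdiv_lt_0_compat; nra. }
    rewrite Rabs_pos_eq by exact Hlo. eapply Rle_trans; [exact Hhi|].
    unfold Rdiv. rewrite Rmult_1_l. apply Rinv_le_contravar; nra. }
  assert (HD : Rabs D <= INR q * / INR M).
  { apply Rabs_sum_n_m_le. intros j Hj. rewrite Rabs_mult, <- (Rmult_1_l (/ INR M)).
    assert (Ha : 0 <= INR j / INR q <= 1).
    { split; [apply Rdiv_le_0_compat; [apply pos_INR | lra]|].
      apply Rmult_le_reg_r with (INR q); [lra|].
      unfold Rdiv. rewrite Rmult_assoc, Rinv_l, Rmult_1_r, Rmult_1_l by lra. apply le_INR; lia. }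
    apply Rmult_le_compat; [apply Rabs_pos | apply Rabs_pos | apply Rabs_le, SIN_bound |].
    apply Rabs_ln_Gamma_defect_le; lra. }
  eapply Rle_trans; [apply Rabs_triang|]. rewrite !Rabs_mult, (Rabs_pos_eq 2) by lra.
  apply Rle_trans with (1 * / INR M + 2 * 1 * (INR q * / INR M)); [|unfold Rdiv; lra].
  apply Rplus_le_compat.
  - apply Rmult_le_compat; auto using Rabs_pos. apply Rabs_le, COS_bound.
  - apply Rmult_le_compat; [generalize (Rabs_pos (sin theta)); lra | apply Rabs_pos | | exact HD].
    apply Rmult_le_compat_l; [lra|]. apply Rabs_le, SIN_bound.
Qed.

Lemma Rabs_series_term_le n : (0 < n)%nat -> Rabs (series_term n) <= / INR n.
Proof.
  intros Hn. assert (Hn0 : 0 < INR n) by now apply lt_0_INR.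
  unfold series_term. rewrite Rabs_mult.
  destruct (ln_1_plus_bounds (1 / INR n)) as [Hlo Hhi]; [apply Rlt_le, Rdiv_lt_0_compat; lra|].
  assert (Hcos : Rabs (cos_odd theta n) <= 1) by (apply Rabs_le, COS_bound).
  rewrite Rabs_pos_eq by exact Hlo. rewrite <- (Rmult_1_r (/ INR n)).
  apply Rmult_le_compat; auto using Rabs_pos. now rewrite <- Rdiv_1_l.
Qed.

Lemma Rabs_partial_sum_add_sub M r : (1 <= M)%nat -> (r <= q)%nat ->
  Rabs (partial_sum (M * q + r) - partial_sum (M * q)) <= / INR M.
Proof.
  intros HM Hr.
  assert (Hq : 0 < INR q) by now apply lt_0_INR.
  assert (HM1 : 1 <= INR M) by (apply (le_INR 1); lia).
  assert (Htail : partial_sum (M * q + r) - partial_sum (M * q)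
                  = sum_n_m (fun i => series_term (M * q + i)) 1 r)
    by (unfold partial_sum; rewrite sum_n_m_1_add; ring).
  rewrite Htail.
  eapply Rle_trans; [apply (Rabs_sum_n_m_le _ (/ (INR M * INR q)))|].
  - intros i Hi. eapply Rle_trans; [apply Rabs_series_term_le; lia|].
    apply Rinv_le_contravar; [nra|]. rewrite <- mult_INR. apply le_INR. lia.
  - apply Rle_trans with (INR q * / (INR M * INR q)).
    + apply Rmult_le_compat_r; [left; apply Rinv_0_lt_compat; nra | now apply le_INR].
    + right. field. lra.
Qed.

Lemma is_lim_seq_partial_sum : is_lim_seq partial_sum series_value.
Proof.
  apply (is_lim_seq_of_blocks _ _ (2 + 2 * INR q) q q_pos). intros M r HM Hr.
  assert (HM1 : 1 <= INR M) by (apply (le_INR 1); lia).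
  replace (partial_sum (M * q + r) - series_value)
    with ((partial_sum (M * q + r) - partial_sum (M * q)) + (partial_sum (M * q) - series_value))
    by ring.
  eapply Rle_trans; [apply Rabs_triang|].
  assert (H1 := Rabs_partial_sum_add_sub M r HM ltac:(lia)).
  assert (H2 := Rabs_partial_sum_mult_period_sub_value M HM).
  replace ((2 + 2 * INR q) / INR M) with (/ INR M + (1 + 2 * INR q) / INR M) by (field; lra).
  lra.
Qed.

Lemma is_series_series_term : is_series (fun n => series_term (S n)) series_value.
Proof.
  assert (Hlim := is_lim_seq_partial_sum).
  apply is_lim_seq_incr_1 in Hlim.
  apply (is_lim_seq_ext _ (sum_n (fun n => series_term (S n)))) in Hlim; [exact Hlim|].
  intros n. unfold partial_sum, sum_n. now rewrite <- sum_n_m_S.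
Qed.

Lemma series_value_drop_last :
  series_value = ln (INR q) * cos_odd theta 0
    - 2 * sin theta * sum_n_m (fun j => sin_even theta j * ln (Gamma (INR j / INR q))) 1 (q - 1).
Proof.
  set (f := fun j => sin_even theta j * ln (Gamma (INR j / INR q))).
  assert (Hlast := sum_n_m_1_add f (q - 1) 1).
  rewrite sum_n_n in Hlast. replace (q - 1 + 1)%nat with q in Hlast by lia.
  unfold series_value. fold f. rewrite Hlast. unfold f at 2.
  rewrite (sin_even_period _ p q theta_period). ring.
Qed.

End Series.

Lemma sin_PI_mult_div_pos p q : (0 < p < q)%nat -> 0 < sin (PI * INR p / INR q).
Proof.
  intros Hpq.
  assert (Hp : 0 < INR p) by (apply lt_0_INR; lia).
  assert (Hq : INR p < INR q) by (apply lt_INR; lia).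
  apply sin_gt_0.
  - apply Rdiv_lt_0_compat; [apply Rmult_lt_0_compat; [apply PI_RGT_0 | exact Hp] | lra].
  - apply Rmult_lt_reg_r with (INR q); [lra|]. unfold Rdiv.
    rewrite Rmult_assoc, Rinv_l, Rmult_1_r by lra.
    apply Rmult_lt_compat_l; [apply PI_RGT_0 | exact Hq].
Qed.

Theorem mainTheorem4 (p q : nat) (hp : (0 < p)%nat) (hpq : (p < q)%nat) :
  is_series
    (fun n : nat =>
       ln (1 + 1 / INR (n + 1))
       * cos ((2 * INR (n + 1) + 1) * PI * INR p / INR q))
    (ln (INR q) * cos (PI * INR p / INR q)
     - 2 * sin (PI * INR p / INR q)
       * sum_n_m (fun j : nat =>
                    ln (Gamma (INR j / INR q)) * sin (2 * PI * INR j * INR p / INR q))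
                 1 (q - 1)).
Proof.
  set (theta := PI * INR p / INR q).
  assert (Hperiod : INR q * theta = INR p * PI)
    by (unfold theta; field; apply not_0_INR; lia).
  assert (Hsin : sin theta <> 0) by (apply Rgt_not_eq, sin_PI_mult_div_pos; lia).
  rewrite (sum_n_m_ext_loc_R _ (fun j => sin_even theta j * ln (Gamma (INR j / INR q)))).
  2: { intros j _. unfold sin_even, theta. rewrite Rmult_comm. do 2 f_equal. unfold Rdiv. ring. }
  replace (cos theta) with (cos_odd theta 0) by (unfold cos_odd; simpl (INR 0); f_equal; ring).
  rewrite <- (series_value_drop_last theta p q ltac:(lia) Hperiod).
  apply (is_series_ext (fun n => series_term theta (S n))).
  - intros n. unfold series_term, cos_odd, theta. rewrite Nat.add_1_r.
    do 2 f_equal. unfold Rdiv. ring.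
  - exact (is_series_series_term theta p q ltac:(lia) Hperiod Hsin).
Qed.
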